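(* Let $a^{(1)},\dots,a^{(\ell)}\in\mathbb{F}$ be pairwise non-conjugate, let $K_i=K_{a^{(i)}}$, and for each $i$ let $\beta^{(i)}_1,\dots,\beta^{(i)}_{n_i}\in\mathbb{F}$ be right linearly independent over $K_i$; put $n=n_1+\dots+n_\ell$. For $k\in\{1,\dots,n\}$ let $\mathcal{C}_{L,k}\subseteq\mathbb{F}^n$ be the linearized Reed-Solomon code consisting of all vectors $(\mathbf{c}^{(1)},\dots,\mathbf{c}^{(\ell)})$, $\mathbf{c}^{(i)}\in\mathbb{F}^{n_i}$, with $c^{(i)}_j=\sum_{l=0}^{k-1}F_l\,\mathcal{D}^l_{a^{(i)}}(\beta^{(i)}_j)$ for some $F_0,\dots,F_{k-1}\in\mathbb{F}$. Then $\mathcal{C}_{L,k}$ is a $k$-dimensional left linear code with $\mathrm{d_{SR}}(\mathcal{C}_{L,k})=n-k+1$, where $\mathrm{d_{SR}}$ is the sum-rank distance with lengths $(n_1,\dots,n_\ell)$ and division subrings $(K_1,\dots,K_\ell)$; i.e. it is a maximum sum-rank distance code.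
   Context: $\mathbb{F}$ is a division ring, $\sigma$ a ring endomorphism of $\mathbb{F}$, $\delta$ a $\sigma$-derivation ($\delta$ additive, $\delta(ab)=\sigma(a)\delta(b)+\delta(a)b$). For $a\in\mathbb{F}$, $\mathcal{D}_a(b)=\sigma(b)a+\delta(b)$, $\mathcal{D}_a^l$ is its $l$-fold composition ($\mathcal{D}_a^0=\mathrm{Id}$), $K_a=\{b\in\mathbb{F}:\mathcal{D}_a(b)=ab\}$ (a division subring), and $a,c$ are conjugate if $c=\mathcal{D}_a(b)b^{-1}$ for some $b\in\mathbb{F}^*$. Sum-rank weight: $\mathrm{wt_{SR}}(\mathbf{c})=\sum_i\dim_{K_i}\langle c^{(i)}_1,\dots,c^{(i)}_{n_i}\rangle^R_{K_i}$ (right $K_i$-spans), $\mathrm{d_{SR}}(\mathbf{c},\mathbf{d})=\mathrm{wt_{SR}}(\mathbf{c}-\mathbf{d})$, and $\mathrm{d_{SR}}(\mathcal{C})$ is the minimum over distinct codewords. *)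

From HB Require Import structures.
From mathcomp Require Import all_boot all_order all_algebra.
From Stdlib Require Import ClassicalEpsilon.
Set Implicit Arguments. Unset Strict Implicit. Unset Printing Implicit Defensive.
Import Order.TTheory GRing.Theory Num.Theory.
Local Open Scope ring_scope.

Definition pb (P : Prop) : bool :=
  if excluded_middle_informative P then true else false.

Lemma pbP (P : Prop) : pb P = true <-> P.
Proof. by rewrite /pb; case: excluded_middle_informative. Qed.

Lemma pb_ex (P : nat -> Prop) : (exists n, P n) -> exists n, pb (P n).
Proof. by case=> n Hn; exists n; apply/pbP. Qed.

(* The least natural number satisfying P (0 if none exists). *)
Definition minnat (P : nat -> Prop) : nat :=
  match excluded_middle_informative (exists n, P n) with
  | left H => @ex_minn (fun n => pb (P n)) (pb_ex H)
  | right _ => 0%N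
  end.

Definition division_ring (F : unitRingType) : Prop :=
  forall x : F, x != 0 -> x \is a GRing.unit.

Definition sigma_derivation (F : unitRingType) (sigma : {rmorphism F -> F})
  (delta : {additive F -> F}) : Prop :=
  forall a b : F, delta (a * b) = sigma a * delta b + delta a * b.

Section Ops.
Variables (F : unitRingType) (sigma : F -> F) (delta : F -> F).

Definition Dop (a b : F) : F := sigma b * a + delta b.

Definition Dpow (a : F) (l : nat) (b : F) : F := iter l (Dop a) b.

Definition Kset (a : F) : pred F := fun b => Dop a b == a * b.

Definition conjugate (a c : F) : Prop :=
  exists b : F, b != 0 /\ c = Dop a b * b^-1.
End Ops.

Section SumRank.
Variable F : unitRingType.

Definition in_rspan (K : pred F) (m : nat) (e : 'I_m -> F) (x : F) : Prop :=
  exists lam : 'I_m -> F, (forall t, K (lam t)) /\ x = \sum_(t < m) e t * lam t.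

(* dim_K <c_1,...,c_m>^R_K : the least number of vectors whose right K-span
   contains all c_j (= the dimension of the right K-span of the c_j). *)
Definition rdim (K : pred F) (m : nat) (c : 'I_m -> F) : nat :=
  minnat (fun r => exists e : 'I_r -> F, forall j, in_rspan K e (c j)).

Definition bvec (ell : nat) (nn : 'I_ell -> nat) : Type :=
  forall i : 'I_ell, 'I_(nn i) -> F.

Definition bsub (ell : nat) (nn : 'I_ell -> nat) (x y : bvec nn) : bvec nn := fun i j => x i j - y i j.
Definition badd (ell : nat) (nn : 'I_ell -> nat) (x y : bvec nn) : bvec nn := fun i j => x i j + y i j.
Definition bscale (ell : nat) (nn : 'I_ell -> nat) (c : F) (x : bvec nn) : bvec nn := fun i j => c * x i j.
Definition bzero (ell : nat) (nn : 'I_ell -> nat) : bvec nn := fun i j => 0.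

Definition wtSR (ell : nat) (nn : 'I_ell -> nat) (K : 'I_ell -> pred F) (x : bvec nn) : nat :=
  (\sum_(i < ell) rdim (K i) (x i))%N.

Definition dSR (ell : nat) (nn : 'I_ell -> nat) (K : 'I_ell -> pred F) (x y : bvec nn) : nat :=
  wtSR K (bsub x y).

Definition dSR_code (ell : nat) (nn : 'I_ell -> nat) (K : 'I_ell -> pred F) (C : bvec nn -> Prop) : nat :=
  minnat (fun d => exists x y, C x /\ C y /\ x <> y /\ dSR K x y = d).

Definition left_linear (ell : nat) (nn : 'I_ell -> nat) (C : bvec nn -> Prop) : Prop :=
  C (@bzero ell nn) /\ (forall x y, C x -> C y -> C (badd x y)) /\
  (forall c x, C x -> C (bscale c x)).

Definition left_dim (ell : nat) (nn : 'I_ell -> nat) (C : bvec nn -> Prop) (k : nat) : Prop :=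
  exists g : 'I_k -> bvec nn,
    (forall t, C (g t)) /\
    (forall lam : 'I_k -> F,
        (forall i j, \sum_(t < k) lam t * g t i j = 0) -> forall t, lam t = 0) /\
    (forall x, C x -> exists lam : 'I_k -> F,
        forall i j, x i j = \sum_(t < k) lam t * g t i j).
End SumRank.

Definition LRS_code (F : unitRingType) (sigma delta : F -> F) (ell : nat)
  (nn : 'I_ell -> nat) (a : 'I_ell -> F) (beta : forall i, 'I_(nn i) -> F)
  (k : nat) : bvec F nn -> Prop :=
  fun x => exists Fc : 'I_k -> F, forall i j,
    x i j = \sum_(l < k) Fc l * Dpow sigma delta (a i) l (beta i j).

(* The codeword of F = sum_(l < k) F_l X^l is the family of evaluations F(D_(a_i))(beta_ij).
   Suppose the evaluations in block i span a right K_i-space of dimension r_i, with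
   sum_i (n_i - r_i) >= k.  Some block has r_i < n_i, so a homogeneous system over K_i has a
   nontrivial solution, i.e. a nonzero g in the K_i-span of the beta_ij with F(D_(a_i))(g) = 0.
   Then F = Q (X - c) with c = D_(a_i)(g) g^-1, and Q, of degree < k - 1, satisfies the same
   hypothesis at the points D_(a_j)(beta) - c beta: block i loses one point (the kernel of
   D_(a_i) - c on the span is g K_i), and the other blocks stay independent because c is
   conjugate to a_i, hence not to a_j.  By induction F = 0.  This gives weight >= n - k + 1 for
   every nonzero codeword; conversely the monic skew polynomial of degree k - 1 annihilating
   k - 1 evaluation points yields a codeword of weight <= n - k + 1. *)

From HB Require Import structures.
From mathcomp Require Import all_boot all_order all_algebra zify.
From Stdlib Require Import ClassicalEpsilon FunctionalExtensionality.
Import GRing.Theory.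
Local Open Scope ring_scope.
Set Implicit Arguments. Unset Strict Implicit. Unset Printing Implicit Defensive.

Section NatIndexedFamilies.
Variable F : unitRingType.

Definition extn n (f : 'I_n -> F) (j : nat) : F := oapp f 0 (insub j).

Lemma extn_ord n (f : 'I_n -> F) (j : 'I_n) : extn f j = f j.
Proof. by rewrite /extn valK. Qed.

Lemma extn_out n (f : 'I_n -> F) j : (n <= j)%N -> extn f j = 0.
Proof. by move=> le_n_j; rewrite /extn insubF // ltnNge le_n_j. Qed.

Definition rindep (S : pred F) n (b : nat -> F) := forall lam : nat -> F,
  (forall j, (j < n)%N -> lam j \in S) -> \sum_(j < n) b j * lam j = 0 ->
  forall j, (j < n)%N -> lam j = 0.

Definition in_span (S : pred F) r (e : nat -> F) x :=
  exists2 mu : nat -> F, (forall t, mu t \in S) & x = \sum_(t < r) e t * mu t.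

End NatIndexedFamilies.

Section HomogeneousSystem.
Variables (F : unitRingType) (S : divringClosed F).
Hypothesis divF : division_ring F.

Lemma homogeneous_system_nontrivial r n (M : nat -> nat -> F) :
  (r < n)%N -> (forall j t, M j t \in S) ->
  exists2 lam : nat -> F, (forall j, lam j \in S) &
    (exists2 j, (j < n)%N & lam j != 0) /\
    (forall t, (t < r)%N -> \sum_(j < n) M j t * lam j = 0).
Proof.
elim: r n M => [|r IHr] n M ltrn SM.
  exists (fun j => (j == 0%N)%:R) => [j|]; first exact: rpred_nat.
  by split=> //; exists 0%N; rewrite ?eqxx ?oner_neq0.
have [/existsP[j0 Mj0]|/existsPn M0] := boolP [exists j : 'I_n, M j r != 0]; last first.
  have [lam Slam [nz_lam eqs]] := IHr n M (ltnW ltrn) SM.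
  exists lam => //; split=> // t; rewrite ltnS leq_eqVlt => /predU1P[->|]; last exact: eqs.
  by rewrite big1 // => j _; move/negPn/eqP: (M0 j) ->; rewrite mul0r.
(* Gaussian elimination: use the pivot M j0 r to clear row r, then solve the smaller system. *)
pose u := (M j0 r)^-1.
pose M' j t := M (bump j0 j) t - M j0 t * u * M (bump j0 j) r.
have SM' j t : M' j t \in S by rewrite rpredB ?rpredM ?rpredV.
have [lam' Slam' [[j' ltj' lam'j'] eqs']] := IHr n.-1 M' ltac:(lia) SM'.
pose Sr := \sum_(i < n.-1) M (bump j0 i) r * lam' i.
pose lam j := if j == j0 :> nat then - (u * Sr) else lam' (unbump j0 j).
have lam_bump i : lam (bump j0 i) = lam' i by rewrite /lam eq_sym (negbTE (neq_bump _ _)) bumpK.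
have split_sum t : \sum_(j < n) M j t * lam j =
    M j0 t * lam j0 + \sum_(i < n.-1) M (bump j0 i) t * lam' i.
  by rewrite (bigD1_ord j0) //=; congr (_ + _); apply: eq_bigr => i _; rewrite lam_bump.
exists lam => [j|].
  rewrite /lam; case: ifP => _ //.
  by rewrite rpredN rpredM ?rpredV // rpred_sum // => i _; rewrite rpredM.
split; first by exists (bump j0 j'); rewrite ?lam_bump //; exact: ltn_ord (lift j0 (Ordinal ltj')).
move=> t; rewrite split_sum /lam eqxx mulrN !mulrA ltnS leq_eqVlt => /predU1P[->|ltt].
  by rewrite mulrV ?divF // mul1r addNr.
have := eqs' t ltt; rewrite /M' (eq_bigr (fun i : 'I_n.-1 => M (bump j0 i) t * lam' i
  - M j0 t * u * (M (bump j0 i) r * lam' i))) => [|i _]; last by rewrite mulrBl !mulrA.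
by rewrite sumrB -mulr_sumr -/Sr => /eqP; rewrite subr_eq0 => /eqP <-; rewrite addNr.
Qed.

End HomogeneousSystem.

Lemma exists_subsum_eq ell (nn : 'I_ell -> nat) m : (m <= \sum_(i < ell) nn i)%N ->
  exists2 z : 'I_ell -> nat, (forall i, z i <= nn i)%N & (\sum_(i < ell) z i)%N = m.
Proof.
elim: ell nn m => [|ell IHell] nn m.
  by rewrite big_ord0 leqn0 => /eqP->; exists (fun=> 0%N); rewrite ?big_ord0.
rewrite big_ord_recl => le_m; pose z0 := minn (nn ord0) m.
have [z le_z sum_z] := IHell (fun i => nn (lift ord0 i)) (m - z0)%N ltac:(lia).
exists (fun i => if unlift ord0 i is Some i' then z i' else z0) => [i|].
  by case: unliftP => [i' ->|->]; rewrite ?le_z ?geq_minl.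
rewrite big_ord_recl unlift_none (eq_bigr z) => [|i _]; last by rewrite liftK.
by rewrite sum_z; lia.
Qed.

Lemma minnat_spec (P : nat -> Prop) : (exists n, P n) ->
  P (minnat P) /\ forall m, P m -> (minnat P <= m)%N.
Proof.
move=> exP; rewrite /minnat; case: excluded_middle_informative => // {}exP.
by case: ex_minnP => m /pbP Pm min_m; split=> // m' Pm'; apply/min_m/pbP.
Qed.

Section RightSpanDimension.
Variables (F : unitRingType) (S : pred F).
Hypotheses (S0 : 0 \in S) (S1 : 1 \in S).

Lemma rdim_exists m (c : 'I_m -> F) :
  exists r, exists e : 'I_r -> F, forall j, in_rspan S e (c j).
Proof.
exists m, c => j; exists (fun t => (t == j)%:R); split=> [t|]; first by case: eqP.
by rewrite (bigD1 j) //= eqxx mulr1 big1 ?addr0 // => t /negbTE->; rewrite mulr0.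
Qed.

Lemma rdim_spanning m (c : 'I_m -> F) :
  exists e : nat -> F, forall j, in_span S (rdim S c) e (c j).
Proof.
have [[e spans] _] := minnat_spec (rdim_exists c).
exists (extn e) => j; have [lam [Slam ->]] := spans j.
exists (extn lam) => [t|]; first by rewrite /extn; case: insub.
by apply: eq_bigr => t _; rewrite !extn_ord.
Qed.

Lemma rdim_zero_prefix m (c : 'I_m -> F) z :
  (forall j : 'I_m, (j < z)%N -> c j = 0) -> (rdim S c <= m - z)%N.
Proof.
move=> c0; have [_ ->] // := minnat_spec (rdim_exists c).
exists (fun t : 'I_(m - z) => extn c (z + t)) => j.
have [ltjz|lezj] := ltnP j z.
  by exists (fun _ => 0); split=> //; rewrite c0 // big1 // => t _; rewrite mulr0.
have ltj : (j - z < m - z)%N by have := ltn_ord j; lia.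
exists (fun t => (t == Ordinal ltj)%:R); split=> [t|]; first by case: eqP.
rewrite (bigD1 (Ordinal ltj)) //= eqxx mulr1 big1 ?addr0 => [|t /negbTE->]; last by rewrite mulr0.
by rewrite subnKC // extn_ord.
Qed.

Lemma rdim_eq0 m (c : 'I_m -> F) : (forall j, c j = 0) -> rdim S c = 0%N.
Proof. by move=> c0; apply/eqP; rewrite -leqn0 -(subnn m) rdim_zero_prefix. Qed.

End RightSpanDimension.

Section SkewOperator.
Variables (F : unitRingType) (sigma : {rmorphism F -> F}) (delta : {additive F -> F}).
Hypotheses (divF : division_ring F) (sder : sigma_derivation sigma delta).

Local Notation D a := (Dop sigma delta a).
Local Notation Dp a l := (Dpow sigma delta a l).
Local Notation K a := (Kset sigma delta a).

Lemma Dop_is_zmod_morphism a : zmod_morphism (D a).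
Proof. by move=> x y; rewrite /Dop rmorphB raddfB mulrBl addrACA opprD. Qed.
HB.instance Definition _ a :=
  GRing.isZmodMorphism.Build F F (D a) (Dop_is_zmod_morphism a).

Lemma DpowS a l x : Dp a l.+1 x = D a (Dp a l x).
Proof. by []. Qed.

Lemma DpowSr a l x : Dp a l.+1 x = Dp a l (D a x).
Proof. exact: iterSr. Qed.

Lemma Dpow_is_zmod_morphism a l : zmod_morphism (Dp a l).
Proof. by elim: l => [//|l IHl] x y; rewrite !DpowS IHl raddfB. Qed.
HB.instance Definition _ a l :=
  GRing.isZmodMorphism.Build F F (Dp a l) (Dpow_is_zmod_morphism a l).

Lemma delta1 : delta 1 = 0.
Proof.
have := sder 1 1; rewrite mul1r rmorph1 mul1r mulr1 => d1.
by apply: (addrI (delta 1)); rewrite addr0 -d1.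
Qed.

Lemma Dop1 a : D a 1 = a.
Proof. by rewrite /Dop rmorph1 mul1r delta1 addr0. Qed.

Lemma Dop_mul a b x : D a (b * x) = sigma b * D a x + delta b * x.
Proof. by rewrite /Dop rmorphM sder mulrDr !mulrA addrA. Qed.

Lemma Dop_mulr_K a x m : m \in K a -> D a (x * m) = D a x * m.
Proof.
move=> /eqP Km; rewrite /Dop rmorphM sder -mulrA addrA -mulrDr.
by rewrite -[sigma m * a + _]/(D a m) Km mulrDl !mulrA.
Qed.

Lemma Dpow_mulr_K a l x m : m \in K a -> Dp a l (x * m) = Dp a l x * m.
Proof. by move=> Km; elim: l => [//|l IHl]; rewrite !DpowS IHl Dop_mulr_K. Qed.

Lemma Kset_inv a y : y \in K a -> y^-1 \in K a.
Proof.
have [->|y0] := eqVneq y 0; first by rewrite invr0.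
move=> /eqP Ky; apply/eqP; apply: (mulrI (rmorph_unit sigma (divF y0))).
have : D a (y * y^-1) = a by rewrite mulrV ?divF // Dop1.
rewrite Dop_mul => /(canRL (addrK _)) ->.
have -> : delta y = a * y - sigma y * a by rewrite -Ky /Dop addrAC subrr add0r.
by rewrite mulrBl mulrK ?divF // opprB addrC subrK mulrA.
Qed.

Lemma Kset_divring_closed a : divring_closed (K a).
Proof.
split=> [|x y /eqP Kx /eqP Ky|x y Kx Ky]; first by apply/eqP; rewrite Dop1 mulr1.
  by apply/eqP; rewrite raddfB /= Kx Ky mulrBr.
by apply/eqP; rewrite Dop_mulr_K ?(eqP Kx) ?mulrA //; apply: Kset_inv.
Qed.
HB.instance Definition _ a :=
  GRing.isDivringClosed.Build F (K a) (Kset_divring_closed a).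

Lemma Dop_mulr_unit a b d : b != 0 -> D a (d * b) = D (D a b * b^-1) d * b.
Proof.
move=> b0; rewrite Dop_mul /Dop mulrDl -!mulrA mulVr ?divF // mulr1.
by rewrite -[sigma b * a + _]/(D a b).
Qed.

Lemma mul_neq0 (x y : F) : x != 0 -> y != 0 -> x * y != 0.
Proof.
move=> x0; apply: contraNneq => xy0; apply/eqP/(mulrI (divF x0)).
by rewrite xy0 mulr0.
Qed.

Lemma conjugate_trans a c e : conjugate sigma delta a c -> conjugate sigma delta c e ->
  conjugate sigma delta a e.
Proof.
move=> [b [b0 ->]] [d [d0 ->]]; exists (d * b); split; first exact: mul_neq0.
by rewrite Dop_mulr_unit // invrM ?divF // !mulrA mulrK ?divF.
Qed.

Lemma conjugate_sym a c : conjugate sigma delta a c -> conjugate sigma delta c a.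
Proof.
move=> [b [b0 ->]]; exists b^-1; split; first by rewrite invr_eq0.
by rewrite invrK -Dop_mulr_unit // mulVr ?divF // Dop1.
Qed.

Lemma conjugate_of_eigen a c y : y != 0 -> D a y = c * y -> conjugate sigma delta a c.
Proof. by move=> y0 Dy; exists y; rewrite Dy mulrK ?divF. Qed.

Lemma eigen_conj_mul a g b : g != 0 -> D a b = D a g * g^-1 * b ->
  exists2 nu, nu \in K a & b = g * nu.
Proof.
move=> g0 Db; set nu := g^-1 * b.
have Eb : b = g * nu by rewrite /nu mulVKr ?divF.
exists nu => //; apply/eqP.
move: Db; rewrite Eb Dop_mul -mulrA mulKr ?divF // {2}/Dop mulrDl => /addIr Db.
by apply: (mulrI (rmorph_unit sigma (divF g0))); rewrite Db mulrA.
Qed.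

(* [Deval a N p x] is p(D_a)(x) for the skew polynomial p = sum_(l < N) p_l X^l. *)
Definition Deval a N (p : nat -> F) x := \sum_(l < N) p l * Dp a l x.

Lemma Deval_is_zmod_morphism a N p : zmod_morphism (Deval a N p).
Proof.
by move=> x y; rewrite /Deval -sumrB; apply: eq_bigr => l _; rewrite raddfB /= mulrBr.
Qed.
HB.instance Definition _ a N p :=
  GRing.isZmodMorphism.Build F F (Deval a N p) (Deval_is_zmod_morphism a N p).

Lemma Deval_mulr_K a N p x m : m \in K a -> Deval a N p (x * m) = Deval a N p x * m.
Proof.
by move=> Km; rewrite /Deval mulr_suml; apply: eq_bigr => l _; rewrite Dpow_mulr_K ?mulrA.
Qed.

Lemma Deval_rcomb a N p n (b mu : nat -> F) : (forall j, (j < n)%N -> mu j \in K a) ->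
  Deval a N p (\sum_(j < n) b j * mu j) = \sum_(j < n) Deval a N p (b j) * mu j.
Proof. by move=> Kmu; rewrite raddf_sum /=; apply: eq_bigr => j _; rewrite Deval_mulr_K ?Kmu. Qed.

Lemma eq_Deval a N p q x : (forall l, (l < N)%N -> p l = q l) -> Deval a N p x = Deval a N q x.
Proof. by move=> pq; apply: eq_bigr => l _; rewrite pq. Qed.

Definition deg_lt N (p : nat -> F) := forall l, (N <= l)%N -> p l = 0.

Lemma Deval_widen a N M p x : deg_lt N p -> (N <= M)%N -> Deval a M p x = Deval a N p x.
Proof.
move=> p0 leNM; rewrite /Deval (big_ord_widen _ (fun l => p l * Dp a l x) leNM) [RHS]big_mkcond.
by apply: eq_bigr => l _; case: ltnP => // /p0->; rewrite mul0r.
Qed.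

Lemma Deval_addl a N p q x :
  Deval a N (fun l => p l + q l) x = Deval a N p x + Deval a N q x.
Proof. by rewrite /Deval -big_split; apply: eq_bigr => l _; rewrite mulrDl. Qed.

Lemma Deval_mull a N h p x : Deval a N (fun l => h * p l) x = h * Deval a N p x.
Proof. by rewrite /Deval mulr_sumr; apply: eq_bigr => l _; rewrite mulrA. Qed.

(* Coefficients of the skew product X * p = sigma(p) X + delta(p). *)
Definition Xmul (p : nat -> F) j := (if j is j'.+1 then sigma (p j') else 0) + delta (p j).

Lemma deg_lt_Xmul N p : deg_lt N p -> deg_lt N.+1 (Xmul p).
Proof. by move=> p0 [//|l] ltNl; rewrite /Xmul !p0 ?rmorph0 ?raddf0 ?addr0 // ltnW. Qed.

Lemma Deval_Xmul a N p x : deg_lt N p -> Deval a N.+1 (Xmul p) x = D a (Deval a N p x).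
Proof.
move=> p0; rewrite raddf_sum /= /Deval.
rewrite (eq_bigr (fun j : 'I_N.+1 => (if j : nat is j'.+1 then sigma (p j') else 0) * Dp a j x
   + delta (p j) * Dp a j x)) => [|j _]; last by rewrite mulrDl.
rewrite big_split /= big_ord_recl big_ord_recr /= mul0r add0r p0 // raddf0 mul0r addr0.
by rewrite -big_split; apply: eq_bigr => l _; rewrite Dop_mul.
Qed.

Definition Dsub a c x := D a x - c * x.

Lemma Dsub_rcomb a c n (b mu : nat -> F) : (forall j, (j < n)%N -> mu j \in K a) ->
  Dsub a c (\sum_(j < n) b j * mu j) = \sum_(j < n) Dsub a c (b j) * mu j.
Proof.
move=> Kmu; rewrite /Dsub raddf_sum /= mulr_sumr -sumrB; apply: eq_bigr => j _.
by rewrite Dop_mulr_K ?Kmu // mulrBl mulrA.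
Qed.

(* Coefficients of the skew product (X - c) * p. *)
Definition XsubC_mul c (p : nat -> F) j := Xmul p j - c * p j.

Lemma deg_lt_XsubC_mul N c p : deg_lt N p -> deg_lt N.+1 (XsubC_mul c p).
Proof. by move=> p0 l ltNl; rewrite /XsubC_mul (deg_lt_Xmul p0) // p0 ?mulr0 ?subr0 // ltnW. Qed.

Lemma Deval_XsubC_mul a N c p x : deg_lt N p ->
  Deval a N.+1 (XsubC_mul c p) x = Dsub a c (Deval a N p x).
Proof.
move=> p0; rewrite (eq_Deval _ _ (q := fun l => Xmul p l + - c * p l)) => [|l _]; last first.
  by rewrite mulNr.
by rewrite Deval_addl Deval_Xmul // Deval_mull (Deval_widen _ _ p0) // mulNr.
Qed.

(* Coefficients of the skew product X^d * c. *)
Definition Xpow_mul d c := iter d Xmul (fun l => (l == 0)%:R * c).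

Lemma deg_lt_Xpow_mul d c : deg_lt d.+1 (Xpow_mul d c).
Proof.
elim: d => [|d IHd]; last exact: deg_lt_Xmul.
by case=> // l _; rewrite /Xpow_mul /= mul0r.
Qed.

Lemma Deval_Xpow_mul a d c x : Deval a d.+1 (Xpow_mul d c) x = Dp a d (c * x).
Proof.
elim: d => [|d IHd]; first by rewrite /Deval big_ord1 /Xpow_mul /= mul1r.
by rewrite /Xpow_mul iterS Deval_Xmul ?IHd //; apply: deg_lt_Xpow_mul.
Qed.

Lemma skew_division_XsubC c d p : deg_lt d.+1 p ->
  exists q r, [/\ deg_lt d q,
    forall a x, Deval a d.+1 p x = Deval a d q (Dsub a c x) + r * x &
    ((forall l, q l = 0) -> r = 0 -> forall l, p l = 0)].
Proof.
elim: d p => [|d IHd] p p0.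
  exists (fun _ => 0), (p 0%N); split=> // [a x|_ p00 [|l] //]; last exact: p0.
  by rewrite /Deval big_ord1 big_ord0 add0r.
(* Remove the leading term h X^(d+1) = h X^d (X - c) + h X^d c. *)
pose h := p d.+1.
pose p' l := (if l == d.+1 then 0 else p l) + h * Xpow_mul d c l.
have p'0 : deg_lt d.+1 p'.
  move=> l ltl; rewrite /p' deg_lt_Xpow_mul // mulr0 addr0.
  by case: eqP => // /eqP ne; apply: p0; rewrite ltn_neqAle eq_sym ne.
have [q' [r [q'0 Ep' pq'0]]] := IHd p' p'0.
exists (fun l => q' l + (l == d)%:R * h), r; split.
- by move=> l ltl; rewrite q'0 ?(ltnW ltl) // gtn_eqF // mul0r addr0.
- move=> a x.
  have Eq y : Deval a d.+1 (fun l => q' l + (l == d)%:R * h) y = Deval a d q' y + h * Dp a d y.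
    rewrite Deval_addl (Deval_widen _ _ q'0) //; congr (_ + _).
    rewrite /Deval big_ord_recr /= eqxx mul1r big1 ?add0r // => l _.
    by rewrite ltn_eqF // !mul0r.
  have Ep : Deval a d.+2 p x = Deval a d.+1 p x + h * Dp a d.+1 x by rewrite /Deval big_ord_recr.
  have Epp : Deval a d.+1 p' x = Deval a d.+1 p x + h * Dp a d (c * x).
    rewrite Deval_addl Deval_mull Deval_Xpow_mul; congr (_ + _).
    by apply: eq_Deval => l ltl; rewrite ltn_eqF.
  have ED : Dp a d.+1 x = Dp a d (Dsub a c x) + Dp a d (c * x).
    by rewrite DpowSr -raddfD /= /Dsub subrK.
  by rewrite Ep Eq ED mulrDr [_ + h * _]addrC addrA -Epp Ep' addrAC.
- move=> q0 r0 l.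
  have h0 : h = 0 by have := q0 d; rewrite q'0 // eqxx mul1r add0r.
  have q'0' l' : q' l' = 0 by have := q0 l'; rewrite h0 mulr0 addr0.
  have := pq'0 q'0' r0 l; rewrite /p' h0 mul0r addr0.
  by case: eqP => [->|].
Qed.

Lemma annihilator_exists (s : seq (F * F)) : exists2 G : nat -> F,
  deg_lt (size s).+1 G /\ G (size s) = 1 &
  forall y, y \in s -> Deval y.1 (size s).+1 G y.2 = 0.
Proof.
elim: s => [|y0 s [G [G0 G1] roots]].
  by exists (fun l => (l == 0%N)%:R) => //; split=> [[]|].
pose v := Deval y0.1 (size s).+1 G y0.2.
exists (XsubC_mul (D y0.1 v * v^-1) G); first split.
- exact: deg_lt_XsubC_mul.
- by rewrite /XsubC_mul /Xmul /= G1 G0 // rmorph1 raddf0 addr0 mulr0 subr0.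
move=> y; rewrite inE => /predU1P[->|ys]; rewrite Deval_XsubC_mul // /Dsub.
  rewrite -/v; have [->|v0] := eqVneq v 0; first by rewrite raddf0 mulr0 subr0.
  by rewrite mulrVK ?divF // subrr.
by rewrite roots // raddf0 mulr0 subr0.
Qed.

Lemma rindep_rcomb_neq0 (S : pred F) n b (lam : nat -> F) j0 : rindep S n b ->
  (forall j, lam j \in S) -> (j0 < n)%N -> lam j0 != 0 -> \sum_(j < n) b j * lam j != 0.
Proof. by move=> indb Slam ltj0; apply: contra => /eqP/(indb lam) ->. Qed.

Lemma Deval_root_in_span a N p n r (b e : nat -> F) : (r < n)%N ->
  (forall j, (j < n)%N -> in_span (K a) r e (Deval a N p (b j))) ->
  exists2 lam : nat -> F, (forall j, lam j \in K a) &
    (exists2 j0, (j0 < n)%N & lam j0 != 0) /\ Deval a N p (\sum_(j < n) b j * lam j) = 0.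
Proof.
move=> ltrn spans.
have [M HM] : exists M : nat -> nat -> F, forall j, (j < n)%N ->
    (forall t, M j t \in K a) /\ Deval a N p (b j) = \sum_(t < r) e t * M j t.
  apply: (choice (fun j (mu : nat -> F) => (j < n)%N ->
    (forall t, mu t \in K a) /\ Deval a N p (b j) = \sum_(t < r) e t * mu t)) => j.
  have [/spans[mu Kmu E]|lenj] := ltnP j n; first by exists mu.
  by exists (fun _ => 0) => ltj; exfalso; lia.
pose M' j t := if (j < n)%N then M j t else 0.
have KM' j t : M' j t \in K a by rewrite /M'; case: ltnP => [/HM[]|] // _; exact: rpred0.
have [lam Klam [nz_lam eqs]] := homogeneous_system_nontrivial divF ltrn KM'.
exists lam => //; split=> //; rewrite Deval_rcomb // (eq_bigr (fun j : 'I_n =>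
  \sum_(t < r) e t * (M' j t * lam j))) => [|j _].
  by rewrite exchange_big big1 // => t _; rewrite -mulr_sumr eqs ?mulr0.
have [_ ->] := HM j (ltn_ord j); rewrite /M' ltn_ord mulr_suml.
by apply: eq_bigr => t _; rewrite mulrA.
Qed.

Lemma rindep_Dsub_nonconj a c n b : ~ conjugate sigma delta a c ->
  rindep (K a) n b -> rindep (K a) n (fun j => Dsub a c (b j)).
Proof.
move=> nconj indb lam Klam; rewrite -Dsub_rcomb // /Dsub => /subr0_eq Dy.
apply: indb => //; apply/eqP/contraT => y0; case: nconj; exact: conjugate_of_eigen y0 Dy.
Qed.

Lemma rindep_Dsub_drop a n b (lam : nat -> F) j0 : rindep (K a) n b ->
  (forall j, lam j \in K a) -> (j0 < n)%N -> lam j0 != 0 ->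
  let g := \sum_(j < n) b j * lam j in
  rindep (K a) n.-1 (fun j => Dsub a (D a g * g^-1) (b (bump j0 j))).
Proof.
move=> indb Klam ltj0 lamj0 g mu Kmu.
rewrite -(Dsub_rcomb _ (fun j => b (bump j0 j))) // /Dsub => /subr0_eq Dy.
have [nu Knu Ey] := eigen_conj_mul (rindep_rcomb_neq0 indb Klam ltj0 lamj0) Dy.
(* The kernel of Dsub on the span is g K, so the relation lifts to one among all the b j. *)
pose mu' j := lam j * nu - (if j == j0 then 0 else mu (unbump j0 j)).
have Kmu' j : (j < n)%N -> mu' j \in K a.
  move=> ltj; rewrite rpredB ?rpredM //; case: eqP => [_|/eqP neq]; first exact: rpred0.
  by apply: Kmu; move: ltj0 ltj neq; rewrite /unbump; case: ltnP => /=; lia.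
have sum_mu' : \sum_(j < n) b j * mu' j = 0.
  rewrite (eq_bigr (fun j : 'I_n => b j * lam j * nu
    - b j * (if (j : nat) == j0 then 0 else mu (unbump j0 j)))) => [|j _]; last first.
    by rewrite mulrBr mulrA.
  rewrite sumrB -mulr_suml -/g -Ey (bigD1_ord (Ordinal ltj0)) //= eqxx mulr0 add0r.
  apply/eqP; rewrite subr_eq0; apply/eqP/eq_bigr => i _.
  by rewrite [bump _ _ == _]eq_sym (negbTE (neq_bump _ _)) bumpK.
have nu0 : nu = 0.
  have := indb mu' Kmu' sum_mu' j0 ltj0; rewrite /mu' eqxx subr0 => lam_nu0.
  by apply: (mulrI (divF lamj0)); rewrite lam_nu0 mulr0.
move=> j ltj; have := indb mu' Kmu' sum_mu' _ (ltn_ord (lift (Ordinal ltj0) (Ordinal ltj))).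
rewrite /mu' /= nu0 mulr0 sub0r [bump _ _ == _]eq_sym (negbTE (neq_bump _ _)) bumpK.
by move/eqP; rewrite oppr_eq0 => /eqP.
Qed.

Lemma Deval_eq0_of_low_rank ell (a : 'I_ell -> F) :
  (forall i j, i != j -> ~ conjugate sigma delta (a i) (a j)) ->
  forall k (n_ r_ : 'I_ell -> nat) (b e : 'I_ell -> nat -> F) p,
  (forall i, rindep (K (a i)) (n_ i) (b i)) -> deg_lt k p ->
  (forall i j, (j < n_ i)%N -> in_span (K (a i)) (r_ i) (e i) (Deval (a i) k p (b i j))) ->
  (k <= \sum_(i < ell) (n_ i - r_ i))%N -> forall l, p l = 0.
Proof.
move=> nonconj; elim=> [|k IHk] n_ r_ b e p indb p0 spans cnt; first by move=> l; apply: p0.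
have [i0 ltrn] : exists i0, (r_ i0 < n_ i0)%N.
  apply/existsP; apply: contraLR cnt => /existsPn rn.
  by rewrite big1 // => i _; apply/eqP; rewrite subn_eq0 leqNgt rn.
have [lam Klam [[j0 ltj0 lamj0] root]] := Deval_root_in_span ltrn (spans i0).
set g := \sum_(j < n_ i0) b i0 j * lam j in root.
have g0 : g != 0 := rindep_rcomb_neq0 (indb i0) Klam ltj0 lamj0.
pose c := D (a i0) g * g^-1.
have conj_c : conjugate sigma delta (a i0) c by exists g.
have [q [r [q0 Ep pq0]]] := skew_division_XsubC c p0.
have r0 : r = 0.
  have Dsub_g : Dsub (a i0) c g = 0 by rewrite /Dsub mulrVK ?divF // subrr.
  have := Ep (a i0) g; rewrite root Dsub_g raddf0 add0r => /esym rg0.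
  by apply: (mulIr (divF g0)); rewrite rg0 mul0r.
have Eq a' x : Deval a' k q (Dsub a' c x) = Deval a' k.+1 p x by rewrite Ep r0 mul0r addr0.
apply: pq0 r0; pose n' i := if i == i0 then (n_ i).-1 else n_ i.
apply: (IHk n' r_ (fun i j => Dsub (a i) c (b i (if i == i0 then bump j0 j else j))) e) => //.
- move=> i; rewrite /n'; case: (eqVneq i i0) => [->|ne].
    exact: rindep_Dsub_drop.
  apply: rindep_Dsub_nonconj (indb i) => conj_i; apply: (nonconj i0 i); first by rewrite eq_sym.
  exact: conjugate_trans conj_c (conjugate_sym conj_i).
- move=> i j; rewrite /n' Eq; case: (eqVneq i i0) => [->|_] ltj; apply: spans => //.
  exact: ltn_ord (lift (Ordinal ltj0) (Ordinal ltj)).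
rewrite (bigD1 i0) //= /n' eqxx (eq_bigr (fun i => n_ i - r_ i)%N) => [|i /negbTE-> //].
move: cnt; rewrite (bigD1 i0) //=; move: (\sum_(i < ell | _) _) => S; lia.
Qed.

Section Code.
Variables (ell : nat) (nn : 'I_ell -> nat) (a : 'I_ell -> F).
Variables (beta : forall i, 'I_(nn i) -> F) (k : nat).
Arguments beta : clear implicits.
Hypothesis nonconj : forall i j, i != j -> ~ conjugate sigma delta (a i) (a j).
Hypothesis beta_indep : forall i (lam : 'I_(nn i) -> F), (forall j, lam j \in K (a i)) ->
  \sum_(j < nn i) beta i j * lam j = 0 -> forall j, lam j = 0.
Hypotheses (k_gt0 : (0 < k)%N) (k_le_n : (k <= \sum_(i < ell) nn i)%N).

Local Notation n := (\sum_(i < ell) nn i)%N.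
Local Notation Ka := (fun i => K (a i)).
Local Notation C := (LRS_code sigma delta a beta k).
Local Notation zero := (@bzero F ell nn).

Lemma rindep_beta i : rindep (K (a i)) (nn i) (extn (beta i)).
Proof.
move=> lam Klam sum0 j ltj.
apply: (beta_indep (fun j : 'I_(nn i) => Klam j (ltn_ord j)) _ (Ordinal ltj)).
by rewrite -[RHS]sum0; apply: eq_bigr => j' _; rewrite extn_ord.
Qed.

Lemma wtSR_eq0 (x : bvec F nn) : (forall i j, x i j = 0) -> wtSR Ka x = 0%N.
Proof. by move=> x0; rewrite /wtSR big1 // => i _; rewrite rdim_eq0 ?rpred0 ?rpred1. Qed.

Lemma LRS_weight_lower_bound x (Fc : 'I_k -> F) :
  (forall i j, x i j = \sum_(l < k) Fc l * Dp (a i) l (beta i j)) -> (exists l, Fc l != 0) ->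
  (n - k + 1 <= wtSR Ka x)%N.
Proof.
move=> Ex [l0 Fl0]; pose r i := rdim (K (a i)) (x i).
have [e spans] : exists e : 'I_ell -> nat -> F,
    forall i j, in_span (K (a i)) (r i) (e i) (x i j).
  apply: (choice (fun i (e : nat -> F) => forall j, in_span (K (a i)) (r i) e (x i j))) => i.
  by apply: rdim_spanning; rewrite ?rpred0 ?rpred1.
have le_n : (n <= \sum_(i < ell) (nn i - r i) + wtSR Ka x)%N.
  by rewrite /wtSR -big_split leq_sum // => i _ /=; rewrite /r; lia.
suff : ~~ (k <= \sum_(i < ell) (nn i - r i))%N by have := k_le_n; lia.
apply: contra Fl0 => cnt; rewrite -extn_ord; apply/eqP.
apply: (Deval_eq0_of_low_rank nonconj rindep_beta _ _ cnt) => [l|i j ltj]; first exact: extn_out.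
have -> : extn (beta i) j = beta i (Ordinal ltj) by rewrite -extn_ord.
rewrite (_ : Deval _ _ _ _ = x i (Ordinal ltj)) ?spans // Ex.
by apply: eq_bigr => l _; rewrite extn_ord.
Qed.

Lemma LRS_distance_lower_bound x y : C x -> C y -> x <> y -> (n - k + 1 <= dSR Ka x y)%N.
Proof.
move=> [Fx Ex] [Fy Ey] xy; apply: (LRS_weight_lower_bound (Fc := fun l => Fx l - Fy l)).
  by move=> i j; rewrite /bsub Ex Ey -sumrB; apply: eq_bigr => l _; rewrite mulrBl.
apply/existsP/contraT => /existsPn Fxy; case: xy.
apply: functional_extensionality_dep => i; apply: functional_extensionality => j.
by rewrite Ex Ey; apply: eq_bigr => l _; move/negPn: (Fxy l); rewrite subr_eq0 => /eqP->.
Qed.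

Lemma LRS_left_linear : left_linear C.
Proof.
split; [|split].
- by exists (fun=> 0) => i j; rewrite big1 // => l _; rewrite mul0r.
- move=> x y [Fx Ex] [Fy Ey]; exists (fun l => Fx l + Fy l) => i j.
  by rewrite /badd Ex Ey -big_split; apply: eq_bigr => l _; rewrite mulrDl.
- move=> c x [Fx Ex]; exists (fun l => c * Fx l) => i j.
  by rewrite /bscale Ex mulr_sumr; apply: eq_bigr => l _; rewrite mulrA.
Qed.

Lemma LRS_left_dim : left_dim C k.
Proof.
exists (fun t i j => Dp (a i) t (beta i j)); split; [|split].
- move=> t; exists (fun l => (l == t)%:R) => i j.
  by rewrite (bigD1 t) //= eqxx mul1r big1 ?addr0 // => l /negbTE->; rewrite mul0r.
- move=> lam lam0 t; apply/eqP/contraT => lamt.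
  have := LRS_weight_lower_bound (fun i j => erefl) (ex_intro _ t lamt).
  by rewrite wtSR_eq0 //; lia.
- by move=> x [Fx Ex]; exists Fx.
Qed.

Lemma LRS_small_weight_codeword :
  exists2 x, C x & x <> zero /\ (dSR Ka x zero <= n - k + 1)%N.
Proof.
(* A codeword vanishing on k - 1 positions: the annihilator of k - 1 evaluation points. *)
have [z le_z sum_z] := exists_subsum_eq (leq_trans (leq_pred k) k_le_n).
pose s := flatten [seq [seq (a i, extn (beta i) j) | j <- iota 0 (z i)] | i <- enum 'I_ell].
have size_s : size s = k.-1.
  rewrite size_flatten /shape sumnE !big_map -enumT big_enum -sum_z.
  by apply: eq_big => // i _; rewrite size_map size_iota.
have [G [G0 G1] roots] := annihilator_exists s.
rewrite size_s prednK // in roots.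
pose x i j := Deval (a i) k G (beta i j).
exists x; first by exists (fun l => G l).
split=> [x0|].
  have ltk : (k.-1 < k)%N by rewrite prednK.
  have nzG : exists l : 'I_k, G l != 0 by exists (Ordinal ltk); rewrite /= -size_s G1 oner_neq0.
  have := LRS_weight_lower_bound (x := x) (fun i j => erefl) nzG.
  by rewrite wtSR_eq0 => [|i j]; [have := k_le_n; lia | rewrite x0].
have zero_prefix i (j : 'I_(nn i)) : (j < z i)%N -> x i j = 0.
  move=> ltj; rewrite /x -[beta i j](extn_ord (beta i)) (roots (a i, extn (beta i) j)) //.
  apply/flatten_mapP; exists i; rewrite ?mem_enum //.
  by apply/mapP; exists (nat_of_ord j); rewrite ?mem_iota.
have sum_split : (\sum_(i < ell) (nn i - z i) + \sum_(i < ell) z i = n)%N.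
  by rewrite -big_split; apply: eq_bigr => i _; rewrite /= subnK.
apply: (@leq_trans (\sum_(i < ell) (nn i - z i))).
  apply: leq_sum => i _; apply: rdim_zero_prefix; rewrite ?rpred0 ?rpred1 // => j ltj.
  by rewrite /bsub zero_prefix // subr0.
by have := k_gt0; lia.
Qed.

Lemma LRS_min_distance : dSR_code Ka C = (n - k + 1)%N.
Proof.
have [x Cx [x0 dx]] := LRS_small_weight_codeword.
have C0 : C zero by exists (fun=> 0) => i j; rewrite big1 // => l _; rewrite mul0r.
have exd : exists d, exists x y, C x /\ C y /\ x <> y /\ dSR Ka x y = d.
  by exists (dSR Ka x zero), x, zero.
rewrite /dSR_code; have [[x' [y' [Cx' [Cy' [xy' <-]]]]] min_d] := minnat_spec exd.
apply/eqP; rewrite eqn_leq LRS_distance_lower_bound // andbT.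
by apply: leq_trans dx; apply: min_d; exists x, zero.
Qed.

End Code.

End SkewOperator.

Theorem mainTheorem13 (F : unitRingType) (sigma : {rmorphism F -> F})
  (delta : {additive F -> F}) (ell : nat) (nn : 'I_ell -> nat)
  (a : 'I_ell -> F) (beta : forall i : 'I_ell, 'I_(nn i) -> F) (k : nat) :
  division_ring F ->
  sigma_derivation sigma delta ->
  (forall i j : 'I_ell, i != j -> ~ conjugate sigma delta (a i) (a j)) ->
  (forall i : 'I_ell, forall lam : 'I_(nn i) -> F,
      (forall j, Kset sigma delta (a i) (lam j)) ->
      \sum_(j < nn i) beta i j * lam j = 0 -> forall j, lam j = 0) ->
  (1 <= k)%N -> (k <= \sum_(i < ell) nn i)%N ->
  let C := @LRS_code F sigma delta ell nn a beta k in
  [/\ left_linear C, left_dim C k &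
      dSR_code (fun i => Kset sigma delta (a i)) C
        = ((\sum_(i < ell) nn i) - k + 1)%N].
Proof.
move=> divF sder nonconj beta_indep k_gt0 k_le_n C; split.
- exact: LRS_left_linear.
- exact: (LRS_left_dim divF sder nonconj beta_indep k_gt0 k_le_n).
- exact: (LRS_min_distance divF sder nonconj beta_indep k_gt0 k_le_n).
Qed.
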